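(* Let $\mathbf{x},\mathbf{y}$ lie in the upper half-plane and let $\mathbf{B}=\frac12\begin{pmatrix}\mathbf{x}+\mathbf{y}&\mathbf{x}-\mathbf{y}\\ \mathbf{x}-\mathbf{y}&\mathbf{x}+\mathbf{y}\end{pmatrix}$. Then $$\mathcal{F}(\mathbf{B})=\frac14\, f^3(\mathbf{x})f^3(\mathbf{y})\,(\mathrm{Im}\,\mathbf{x})(\mathrm{Im}\,\mathbf{y})\,\left|\vartheta_3^4(\mathbf{x})\vartheta_4^4(\mathbf{y})-\vartheta_4^4(\mathbf{x})\vartheta_3^4(\mathbf{y})\right|,$$ where $f(\sigma)=(\mathrm{Im}\,\sigma)^{1/2}|\vartheta_2(\sigma)\vartheta_3(\sigma)\vartheta_4(\sigma)|^{2/3}$.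
   Context: $\mathcal{F}(\mathbf{B})=(\det\mathrm{Im}\,\mathbf{B})^{5/2}\prod_{s=1}^{10}|\Theta[\beta_s](\mathbf{B})|$, where for $\mathbf{p},\mathbf{q}\in\{0,\frac12\}^2$, $\Theta[^{\mathbf{p}}_{\mathbf{q}}](\mathbf{B})=\sum_{\mathbf{m}\in\mathbb{Z}^2}\exp\{\pi i\langle\mathbf{B}(\mathbf{m}+\mathbf{p}),\mathbf{m}+\mathbf{p}\rangle+2\pi i\langle\mathbf{m}+\mathbf{p},\mathbf{q}\rangle\}$, and $\beta_1,\dots,\beta_{10}$ are the ten even characteristics ($4\langle\mathbf{p},\mathbf{q}\rangle$ even). The genus one theta constants are $\vartheta_2(\sigma)=\sum_{n\in\mathbb{Z}}e^{\pi i\sigma(n+1/2)^2}$, $\vartheta_3(\sigma)=\sum_{n}e^{\pi i\sigma n^2}$, $\vartheta_4(\sigma)=\sum_n(-1)^ne^{\pi i\sigma n^2}$. *)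

From Stdlib Require Import Reals List.
From Coquelicot Require Import Coquelicot.
Import ListNotations.
Open Scope R_scope.
Open Scope C_scope.

Definition cexp (z : C) : C :=
  (exp (Re z) * cos (Im z), exp (Re z) * sin (Im z))%R.

(* real power, with the convention 0^y = 0 (used only for y > 0) *)
Definition rpow (x y : R) : R := if Rlt_dec 0 x then Rpower x y else 0%R.

Definition clim (s : nat -> C) : C :=
  (real (Lim_seq (fun N => Re (s N))), real (Lim_seq (fun N => Im (s N)))).

Definition zrange (N : nat) : list Z :=
  map (fun k => (Z.of_nat k - Z.of_nat N)%Z) (seq 0 (2 * N + 1)).

Definition csum (l : list C) : C := fold_right Cplus 0 l.

Definition zsum (g : Z -> C) : C :=
  clim (fun N => csum (map g (zrange N))).

(* sum over m in Z^2, as limit of partial sums over the squares [-N,N]^2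
   (the theta series below converge absolutely) *)
Definition z2sum (g : Z -> Z -> C) : C :=
  clim (fun N => csum (flat_map (fun m1 => map (g m1) (zrange N)) (zrange N))).

Definition theta2 (s : C) : C :=
  zsum (fun n => cexp (PI * Ci * s * RtoC ((IZR n + /2) ^ 2))).
Definition theta3 (s : C) : C :=
  zsum (fun n => cexp (PI * Ci * s * RtoC (IZR n ^ 2))).
Definition theta4 (s : C) : C :=
  zsum (fun n => RtoC (powerRZ (-1) n) * cexp (PI * Ci * s * RtoC (IZR n ^ 2))).

(* a half-integer characteristic entry: b = true means 1/2, false means 0 *)
Definition half (b : bool) : R := if b then (/2)%R else 0%R.

(* genus two theta constant Theta[p;q](B), B = (b11 b12; b21 b22),
   p = (half p1, half p2), q = (half q1, half q2) *)
Definition Theta (b11 b12 b21 b22 : C) (p1 p2 q1 q2 : bool) : C :=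
  z2sum (fun m1 m2 =>
    let v1 := (IZR m1 + half p1)%R in
    let v2 := (IZR m2 + half p2)%R in
    let Q := b11 * RtoC (v1 * v1) + b12 * RtoC (v2 * v1)
           + b21 * RtoC (v1 * v2) + b22 * RtoC (v2 * v2) in
    cexp (PI * Ci * Q + 2 * PI * Ci * RtoC (v1 * half q1 + v2 * half q2))).

Definition all_chars : list (bool * bool * bool * bool) :=
  flat_map (fun p1 => flat_map (fun p2 => flat_map (fun q1 =>
    map (fun q2 => (p1, p2, q1, q2)) [true; false]) [true; false]) [true; false])
    [true; false].

(* even characteristic: 4<p,q> even *)
Definition even_char (c : bool * bool * bool * bool) : bool :=
  let '(p1, p2, q1, q2) := c in negb (xorb (p1 && q1) (p2 && q2)).

Definition even_chars := filter even_char all_chars.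

Definition calF (b11 b12 b21 b22 : C) : R :=
  (rpow (Im b11 * Im b22 - Im b12 * Im b21) (5/2) *
   fold_right Rmult 1
     (map (fun c => let '(p1, p2, q1, q2) := c in
                    Cmod (Theta b11 b12 b21 b22 p1 p2 q1 q2)) even_chars))%R.

Definition fmod (s : C) : R :=
  (rpow (Im s) (1/2) * rpow (Cmod (theta2 s * theta3 s * theta4 s)) (2/3))%R.

(* The quadratic form of B is <B v, v> = 2x ((v1 + v2)/2)^2 + 2y ((v1 - v2)/2)^2.  Splitting
   Z^2 according to the parity of m1 + m2 therefore writes each genus two theta constant at B
   as a sum of two products of genus one theta series in 2x and 2y with characteristics in
   (1/4)Z.  The same splitting, applied to a product of two genus one series, gives the
   duplication formulas
     theta3(x)^2 = theta3(2x)^2 + theta2(2x)^2,   theta4(x)^2 = theta3(2x)^2 - theta2(2x)^2,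
     theta3 theta4(x) = theta4(2x)^2,  theta2 theta3(x) = 2 A(2x)^2,  theta2 theta4(x) = 2 S(2x)^2,
   where A and S are the series with characteristic 1/4, without and with the sign (-1)^k.
   After these substitutions both sides of the identity are the same polynomial.  Every
   splitting of a series is checked on partial sums over the boxes [-N, N]^2, whose error is
   a geometric tail. *)

From Stdlib Require Import Reals List Permutation Lia Lra Psatz ZArith FunctionalExtensionality.
From Coquelicot Require Import Coquelicot.
Import ListNotations.
Open Scope R_scope.

(** * Finite sums and integer boxes *)

Definition rsum (l : list R) : R := fold_right Rplus 0 l.

Lemma csum_app l1 l2 : csum (l1 ++ l2) = (csum l1 + csum l2)%C.
Proof. induction l1 as [|a l1 IH]; simpl; [ring | rewrite IH; ring]. Qed.

Lemma rsum_app l1 l2 : rsum (l1 ++ l2) = rsum l1 + rsum l2.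
Proof. induction l1 as [|a l1 IH]; simpl; [ring | rewrite IH; ring]. Qed.

Lemma csum_Permutation l l' : Permutation l l' -> csum l = csum l'.
Proof. induction 1; simpl; try ring; congruence. Qed.

Lemma rsum_Permutation l l' : Permutation l l' -> rsum l = rsum l'.
Proof. induction 1; simpl; try ring; congruence. Qed.

Lemma csum_map_scal {A} (c : C) (f : A -> C) l :
  csum (map (fun a => c * f a)%C l) = (c * csum (map f l))%C.
Proof. induction l as [|a l IH]; simpl; [ring | rewrite IH; ring]. Qed.

Lemma rsum_map_scal {A} (c : R) (f : A -> R) l :
  rsum (map (fun a => c * f a) l) = c * rsum (map f l).
Proof. induction l as [|a l IH]; simpl; [ring | rewrite IH; ring]. Qed.

Lemma rsum_map_nonneg {A} (f : A -> R) l :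
  (forall a, In a l -> 0 <= f a) -> 0 <= rsum (map f l).
Proof.
  induction l as [|a l IH]; simpl; intros H; [lra|].
  pose proof (H a (or_introl eq_refl)). pose proof (IH (fun b Hb => H b (or_intror Hb))). lra.
Qed.

Lemma Cmod_csum_le {A} (f : A -> C) (g : A -> R) l :
  (forall a, In a l -> Cmod (f a) <= g a) -> Cmod (csum (map f l)) <= rsum (map g l).
Proof.
  induction l as [|a l IH]; simpl; intros H.
  - rewrite Cmod_0. lra.
  - eapply Rle_trans; [apply Cmod_triangle|]. apply Rplus_le_compat; auto.
Qed.

Lemma csum_list_prod {A B} (f : A -> C) (g : B -> C) l l' :
  csum (map (fun p => f (fst p) * g (snd p))%C (list_prod l l')) =
  (csum (map f l) * csum (map g l'))%C.
Proof.
  induction l as [|a l IH]; simpl; [ring|].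
  rewrite map_app, csum_app, IH, map_map. simpl. rewrite csum_map_scal. ring.
Qed.

Lemma rsum_list_prod {A B} (f : A -> R) (g : B -> R) l l' :
  rsum (map (fun p => f (fst p) * g (snd p)) (list_prod l l')) = rsum (map f l) * rsum (map g l').
Proof.
  induction l as [|a l IH]; simpl; [ring|].
  rewrite map_app, rsum_app, IH, map_map. simpl. rewrite rsum_map_scal. ring.
Qed.

Lemma NoDup_map_inj {A B} (f : A -> B) l :
  (forall a a', f a = f a' -> a = a') -> NoDup l -> NoDup (map f l).
Proof. intros Hf. apply NoDup_map_NoDup_ForallPairs. intros a a' _ _. apply Hf. Qed.

Lemma NoDup_list_prod {A B} (l : list A) (l' : list B) :
  NoDup l -> NoDup l' -> NoDup (list_prod l l').
Proof.
  induction l as [|a l IH]; simpl; intros Hl Hl'; [constructor|].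
  inversion Hl; subst. apply NoDup_app; auto.
  - apply NoDup_map_inj; auto. now intros b b' [= ->].
  - intros [a' b] Hin Hin'. apply in_map_iff in Hin as [b' [[= <- _] _]].
    apply in_prod_iff in Hin'. tauto.
Qed.

Lemma Permutation_complement {A} (dec : forall a b : A, {a = b} + {a <> b}) (l l' : list A) :
  NoDup l -> NoDup l' -> incl l l' ->
  exists r, Permutation l' (l ++ r) /\ NoDup r /\ forall b, In b r -> In b l' /\ ~ In b l.
Proof.
  intros Hl Hl' Hincl.
  set (r := filter (fun b => if in_dec dec b l then false else true) l').
  assert (Hr : forall b, In b r <-> In b l' /\ ~ In b l).
  { intros b. unfold r. rewrite filter_In. destruct (in_dec dec b l); intuition discriminate. }
  exists r. split; [|split; [apply NoDup_filter; auto | apply Hr]].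
  apply NoDup_Permutation; auto.
  - apply NoDup_app; auto; [apply NoDup_filter; auto|]. intros b Hb Hb'. apply Hr in Hb'. tauto.
  - intros b. rewrite in_app_iff, Hr. destruct (in_dec dec b l); intuition.
Qed.

Lemma rsum_map_incl_le {A} (dec : forall a b : A, {a = b} + {a <> b}) (f : A -> R) r l :
  NoDup r -> NoDup l -> incl r l -> (forall a, In a l -> 0 <= f a) ->
  rsum (map f r) <= rsum (map f l).
Proof.
  intros Hr Hl Hincl Hf.
  destruct (Permutation_complement dec r l Hr Hl Hincl) as (r' & Hp & _ & Hr').
  rewrite (rsum_Permutation _ _ (Permutation_map f Hp)), map_app, rsum_app.
  pose proof (rsum_map_nonneg f r' (fun a Ha => Hf a (proj1 (Hr' a Ha)))). lra.
Qed.

Lemma zrange_In N m : In m (zrange N) <-> (- Z.of_nat N <= m <= Z.of_nat N)%Z.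
Proof.
  unfold zrange. rewrite in_map_iff. split.
  - intros [k [<- H]]. apply in_seq in H. lia.
  - intros H. exists (Z.to_nat (m + Z.of_nat N)). split; [lia | apply in_seq; lia].
Qed.

Lemma zrange_NoDup N : NoDup (zrange N).
Proof. apply NoDup_map_inj; [lia | apply seq_NoDup]. Qed.

Lemma zrange_S N : zrange (S N) = (- Z.of_nat (S N))%Z :: zrange N ++ [Z.of_nat (S N)].
Proof.
  unfold zrange. replace (2 * S N + 1)%nat with (S (S (2 * N + 1))) by lia.
  rewrite seq_S, <- cons_seq, <- seq_shift, !map_app, map_cons, map_map, <- app_comm_cons.
  f_equal. f_equal; [apply map_ext; intros; lia | cbn [map]; f_equal; lia].
Qed.

Lemma csum_zrange_S (g : Z -> C) N :
  csum (map g (zrange (S N))) =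
  (g (- Z.of_nat (S N))%Z + csum (map g (zrange N)) + g (Z.of_nat (S N)))%C.
Proof. rewrite zrange_S. simpl. rewrite map_app, csum_app. simpl. ring. Qed.

Lemma rsum_zrange_S (g : Z -> R) N :
  rsum (map g (zrange (S N)))
  = g (- Z.of_nat (S N))%Z + rsum (map g (zrange N)) + g (Z.of_nat (S N)).
Proof. rewrite zrange_S. simpl. rewrite map_app, rsum_app. simpl. ring. Qed.

Definition box (N : nat) : list (Z * Z) := list_prod (zrange N) (zrange N).

Lemma box_In N a b : In (a, b) (box N) <->
  (- Z.of_nat N <= a <= Z.of_nat N)%Z /\ (- Z.of_nat N <= b <= Z.of_nat N)%Z.
Proof. unfold box. rewrite in_prod_iff, !zrange_In. tauto. Qed.

Lemma box_NoDup N : NoDup (box N).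
Proof. apply NoDup_list_prod; apply zrange_NoDup. Qed.

Definition Zpair_eq_dec (u v : Z * Z) : {u = v} + {u <> v}.
Proof. decide equality; apply Z.eq_dec. Defined.

(** * Limits of complex sequences *)

Definition is_clim (s : nat -> C) (l : C) : Prop :=
  is_lim_seq (fun n => Re (s n)) (Re l) /\ is_lim_seq (fun n => Im (s n)) (Im l).

Lemma is_clim_unique s l : is_clim s l -> clim s = l.
Proof.
  intros [H1 H2]. unfold clim.
  rewrite (is_lim_seq_unique _ _ H1), (is_lim_seq_unique _ _ H2). now destruct l.
Qed.

Lemma is_clim_ext s t l : (forall n, s n = t n) -> is_clim t l -> is_clim s l.
Proof. intros E [H1 H2]. split; eapply is_lim_seq_ext; eauto; intros n; now rewrite E. Qed.

Lemma is_clim_plus s t l m : is_clim s l -> is_clim t m -> is_clim (fun n => s n + t n)%C (l + m)%C.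
Proof. intros [H1 H2] [H3 H4]. split; apply is_lim_seq_plus'; auto. Qed.

Lemma is_clim_mult s t l m : is_clim s l -> is_clim t m -> is_clim (fun n => s n * t n)%C (l * m)%C.
Proof.
  intros [H1 H2] [H3 H4]. split.
  - apply is_lim_seq_minus'; apply is_lim_seq_mult'; auto.
  - apply is_lim_seq_plus'; apply is_lim_seq_mult'; auto.
Qed.

Lemma Rabs_Im_le_Cmod c : Rabs (Im c) <= Cmod c.
Proof.
  destruct c as [a b]. unfold Cmod, Im. simpl. rewrite <- sqrt_Rsqr_abs.
  apply sqrt_le_1_alt. unfold Rsqr. nra.
Qed.

Lemma is_lim_seq_0_le (u e : nat -> R) :
  (forall n, Rabs (u n) <= e n) -> is_lim_seq e 0 -> is_lim_seq u 0.
Proof.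
  intros H He. apply is_lim_seq_le_le with (u := fun n => - e n) (w := e); auto.
  - intros n. specialize (H n). apply Rabs_le_between in H. lra.
  - replace (Finite 0) with (Rbar_opp 0) by (simpl; f_equal; ring). now apply -> is_lim_seq_opp.
Qed.

Lemma is_clim_approx s t l (e : nat -> R) :
  (forall n, Cmod (s n - t n)%C <= e n) -> is_lim_seq e 0 -> is_clim t l -> is_clim s l.
Proof.
  intros H He [H1 H2].
  assert (A1 : is_lim_seq (fun n => Re (s n - t n)%C) 0).
  { apply is_lim_seq_0_le with e; auto.
    intros n. eapply Rle_trans; [apply re_le_Cmod | auto]. }
  assert (A2 : is_lim_seq (fun n => Im (s n - t n)%C) 0).
  { apply is_lim_seq_0_le with e; auto.
    intros n. eapply Rle_trans; [apply Rabs_Im_le_Cmod | auto]. }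
  split.
  - apply is_lim_seq_ext with (fun n => Re (s n - t n)%C + Re (t n));
      [intros n; unfold Re; simpl; ring|].
    replace (Re l) with (0 + Re l) by ring. now apply is_lim_seq_plus'.
  - apply is_lim_seq_ext with (fun n => Im (s n - t n)%C + Im (t n));
      [intros n; unfold Im; simpl; ring|].
    replace (Im l) with (0 + Im l) by ring. now apply is_lim_seq_plus'.
Qed.

Lemma ex_finite_lim_seq_cauchy (u e : nat -> R) :
  (forall n m, (n <= m)%nat -> Rabs (u m - u n) <= e n) -> is_lim_seq e 0 -> ex_finite_lim_seq u.
Proof.
  intros H He. apply ex_lim_seq_cauchy_corr. intros eps.
  apply is_lim_seq_spec in He. destruct (He eps) as [N HN]. exists N. intros n m Hn Hm.
  pose proof (Rle_abs (e n - 0)). pose proof (Rle_abs (e m - 0)).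
  specialize (HN n Hn) as HNn. specialize (HN m Hm) as HNm.
  destruct (Nat.le_ge_cases n m) as [L|L].
  - specialize (H n m L). rewrite Rabs_minus_sym. lra.
  - specialize (H m n L). lra.
Qed.

Lemma is_clim_cauchy (s : nat -> C) (e : nat -> R) :
  (forall n m, (n <= m)%nat -> Cmod (s m - s n)%C <= e n) -> is_lim_seq e 0 ->
  exists l, is_clim s l.
Proof.
  intros H He.
  assert (E1 : ex_finite_lim_seq (fun n => Re (s n))).
  { apply ex_finite_lim_seq_cauchy with e; auto. intros n m L.
    eapply Rle_trans; [|apply (H n m L)].
    replace (Re (s m) - Re (s n)) with (Re (s m - s n)%C) by (unfold Re; simpl; ring).
    apply re_le_Cmod. }
  assert (E2 : ex_finite_lim_seq (fun n => Im (s n))).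
  { apply ex_finite_lim_seq_cauchy with e; auto. intros n m L.
    eapply Rle_trans; [|apply (H n m L)].
    replace (Im (s m) - Im (s n)) with (Im (s m - s n)%C) by (unfold Im; simpl; ring).
    apply Rabs_Im_le_Cmod. }
  destruct E1 as [l1 H1], E2 as [l2 H2]. now exists (l1, l2).
Qed.

Lemma is_lim_seq_scal_geom K s : 0 <= s < 1 -> is_lim_seq (fun n => K * s ^ n) 0.
Proof.
  intros Hs. replace (Finite 0) with (Rbar_mult K 0) by (simpl; f_equal; ring).
  apply is_lim_seq_scal_l, is_lim_seq_geom. rewrite Rabs_pos_eq; lra.
Qed.

(** * Geometrically dominated series over Z *)

Lemma pow_unit_interval s n : 0 <= s <= 1 -> 0 <= s ^ n <= 1.
Proof. intros Hs. induction n; simpl; nra. Qed.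

Lemma pow_le_pow_unit s n m : 0 <= s <= 1 -> (n <= m)%nat -> s ^ m <= s ^ n.
Proof.
  intros Hs L. replace m with (n + (m - n))%nat by lia. rewrite pow_add.
  pose proof (pow_unit_interval s n Hs). pose proof (pow_unit_interval s (m - n) Hs). nra.
Qed.

Definition zgeom (s : R) (m : Z) : R := s ^ Z.abs_nat m.

Lemma zgeom_pos s m : 0 < s -> 0 < zgeom s m.
Proof. intros Hs. now apply pow_lt. Qed.

Lemma zgeom_le_1 s m : 0 < s < 1 -> zgeom s m <= 1.
Proof. intros Hs. apply pow_unit_interval. lra. Qed.

Lemma zgeom_of_nat s n : zgeom s (Z.of_nat n) = s ^ n.
Proof. unfold zgeom. f_equal. lia. Qed.

Lemma zgeom_opp s m : zgeom s (- m) = zgeom s m.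
Proof. unfold zgeom. f_equal. lia. Qed.

Lemma rsum_zgeom_le s N : 0 < s < 1 -> rsum (map (zgeom s) (zrange N)) <= (1 + s) / (1 - s).
Proof.
  intros Hs.
  enough (H : rsum (map (zgeom s) (zrange N)) <= (1 + s) / (1 - s) - 2 * s ^ S N / (1 - s)).
  { enough (0 <= 2 * s ^ S N / (1 - s)) by lra.
    apply Rmult_le_pos; [pose proof (pow_lt s (S N)); lra | apply Rlt_le, Rinv_0_lt_compat; lra]. }
  induction N.
  - simpl. unfold zgeom. simpl. apply Req_le. field. lra.
  - rewrite rsum_zrange_S, zgeom_opp, zgeom_of_nat.
    replace (2 * s ^ S (S N) / (1 - s)) with (2 * s ^ S N / (1 - s) - 2 * s ^ S N)
      by (simpl; field; lra).
    lra.
Qed.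

Definition zbound (g : Z -> C) (K s : R) : Prop :=
  0 < s < 1 /\ 0 <= K /\ forall m, Cmod (g m) <= K * zgeom s m ^ 2.

Definition zdominated (g : Z -> C) : Prop := exists K s, zbound g K s.

Definition zpartial (g : Z -> C) (N : nat) : C := csum (map g (zrange N)).

Lemma zbound_of_nat g K s n : zbound g K s ->
  Cmod (g (Z.of_nat n)) <= K * s ^ n /\ Cmod (g (- Z.of_nat n)%Z) <= K * s ^ n.
Proof.
  intros (Hs & HK & Hg).
  assert (Hsq : zgeom s (Z.of_nat n) ^ 2 <= s ^ n).
  { rewrite zgeom_of_nat. pose proof (pow_unit_interval s n ltac:(lra)). nra. }
  split; eapply Rle_trans; try apply Hg; rewrite ?zgeom_opp; apply Rmult_le_compat_l; auto.
Qed.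

(* The bound carries its own tail term, so that the induction on d telescopes. *)
Lemma zpartial_cauchy g K s n d : zbound g K s ->
  Cmod (zpartial g (n + d) - zpartial g n)%C
  <= 2 * K * s ^ S n / (1 - s) - 2 * K * s ^ S (n + d) / (1 - s).
Proof.
  intros Hg. pose proof Hg as (Hs & HK & _). induction d.
  - rewrite Nat.add_0_r. replace (zpartial g n - zpartial g n)%C with (RtoC 0) by ring.
    rewrite Cmod_0. lra.
  - replace (n + S d)%nat with (S (n + d)) by lia. unfold zpartial in *. rewrite csum_zrange_S.
    set (N := (n + d)%nat) in *.
    replace (g (- Z.of_nat (S N))%Z + csum (map g (zrange N)) + g (Z.of_nat (S N))
             - csum (map g (zrange n)))%C
      with ((csum (map g (zrange N)) - csum (map g (zrange n)))
            + (g (- Z.of_nat (S N))%Z + g (Z.of_nat (S N))))%C by ring.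
    destruct (zbound_of_nat g K s (S N) Hg) as [H1 H2].
    pose proof (Cmod_triangle (g (- Z.of_nat (S N))%Z) (g (Z.of_nat (S N)))).
    pose proof (Cmod_triangle (csum (map g (zrange N)) - csum (map g (zrange n)))
                  (g (- Z.of_nat (S N))%Z + g (Z.of_nat (S N)))).
    replace (2 * K * s ^ S (S N) / (1 - s)) with (2 * K * s ^ S N / (1 - s) - 2 * K * s ^ S N)
      by (simpl; field; lra).
    lra.
Qed.

Lemma zsum_is_clim g : zdominated g -> is_clim (zpartial g) (zsum g).
Proof.
  intros (K & s & Hg). pose proof Hg as (Hs & HK & _).
  assert (Hc : exists l, is_clim (zpartial g) l).
  { apply is_clim_cauchy with (fun n => 2 * K * s / (1 - s) * s ^ n);
      [|apply is_lim_seq_scal_geom; lra].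
    intros n m L. replace m with (n + (m - n))%nat by lia.
    eapply Rle_trans; [apply (zpartial_cauchy g K s n (m - n) Hg)|].
    assert (0 <= 2 * K * s ^ S (n + (m - n)) / (1 - s)).
    { apply Rmult_le_pos; [pose proof (pow_lt s (S (n + (m - n)))); nra
                          | apply Rlt_le, Rinv_0_lt_compat; lra]. }
    replace (2 * K * s / (1 - s) * s ^ n) with (2 * K * s ^ S n / (1 - s)) by (simpl; field; lra).
    lra. }
  destruct Hc as [l Hl]. unfold zsum. fold (zpartial g). now rewrite (is_clim_unique _ _ Hl).
Qed.

Lemma zdominated_opp g : zdominated g -> zdominated (fun k => - g k)%C.
Proof.
  intros (K & s & Hs & HK & Hg). exists K, s. split; [|split]; auto.
  intros m. now rewrite Cmod_opp.
Qed.

Lemma zsum_opp g : zdominated g -> zsum (fun k => - g k)%C = (- zsum g)%C.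
Proof.
  intros Hg. apply is_clim_unique. apply is_clim_ext with (fun N => - zpartial g N)%C.
  - intros N. unfold zpartial. induction (zrange N) as [|a l IH]; simpl; [ring | rewrite IH; ring].
  - destruct (zsum_is_clim g Hg) as [H1 H2]. split.
    + apply (is_lim_seq_opp _ (Finite (Re (zsum g)))) in H1. exact H1.
    + apply (is_lim_seq_opp _ (Finite (Im (zsum g)))) in H2. exact H2.
Qed.

Lemma zpartial_reflect g N :
  zpartial (fun k => g (-1 - k)%Z) N = (zpartial g N - g (Z.of_nat N) + g (- Z.of_nat (S N))%Z)%C.
Proof.
  unfold zpartial. induction N.
  - simpl. ring.
  - rewrite !csum_zrange_S, IHN.
    replace (-1 - - Z.of_nat (S N))%Z with (Z.of_nat N) by lia.
    replace (-1 - Z.of_nat (S N))%Z with (- Z.of_nat (S (S N)))%Z by lia. ring.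
Qed.

Lemma zsum_reflect g : zdominated g -> zsum (fun k => g (-1 - k)%Z) = zsum g.
Proof.
  intros Hg. pose proof Hg as (K & s & Hb). pose proof Hb as (Hs & HK & _).
  apply is_clim_unique, (is_clim_approx _ (zpartial g) _ (fun n => 2 * K * s ^ n));
    [| apply is_lim_seq_scal_geom; lra | now apply zsum_is_clim].
  intros n. fold (zpartial (fun k => g (-1 - k)%Z) n). rewrite zpartial_reflect.
  replace (zpartial g n - g (Z.of_nat n) + g (- Z.of_nat (S n))%Z - zpartial g n)%C
    with (- g (Z.of_nat n) + g (- Z.of_nat (S n))%Z)%C by ring.
  eapply Rle_trans; [apply Cmod_triangle|]. rewrite Cmod_opp.
  destruct (zbound_of_nat g K s n Hb) as [H1 _]. destruct (zbound_of_nat g K s (S n) Hb) as [_ H2].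
  pose proof (pow_le_pow_unit s n (S n) ltac:(lra) (Nat.le_succ_diag_r n)). nra.
Qed.

(** * Double series and their parity splittings *)

Definition z2bound (G : Z -> Z -> C) (K s : R) : Prop :=
  0 < s < 1 /\ 0 <= K /\ forall a b, Cmod (G a b) <= K * (zgeom s a ^ 2 * zgeom s b ^ 2).

Definition z2dominated (G : Z -> Z -> C) : Prop := exists K s, z2bound G K s.

Definition z2partial (G : Z -> Z -> C) (N : nat) : C :=
  csum (map (fun b => G (fst b) (snd b)) (box N)).

Lemma flat_map_map_eq_list_prod {A B D} (g : A -> B -> D) l l' :
  flat_map (fun a => map (g a) l') l = map (fun p => g (fst p) (snd p)) (list_prod l l').
Proof. induction l as [|a l IH]; simpl; [reflexivity | now rewrite map_app, IH, map_map]. Qed.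

Lemma z2sum_eq_clim G : z2sum G = clim (z2partial G).
Proof.
  unfold z2sum, z2partial, box. f_equal. apply functional_extensionality. intros N.
  now rewrite flat_map_map_eq_list_prod.
Qed.

Lemma z2partial_mul g h N : z2partial (fun a b => g a * h b)%C N = (zpartial g N * zpartial h N)%C.
Proof. apply csum_list_prod. Qed.

Lemma zgeom_le_Rmax_l s1 s2 m : 0 < s1 -> zgeom s1 m <= zgeom (Rmax s1 s2) m.
Proof. intros Hs. apply pow_incr. split; [lra | apply Rmax_l]. Qed.

Lemma z2dominated_mul g h : zdominated g -> zdominated h -> z2dominated (fun a b => g a * h b)%C.
Proof.
  intros (K1 & s1 & Hs1 & HK1 & Hg) (K2 & s2 & Hs2 & HK2 & Hh).
  exists (K1 * K2), (Rmax s1 s2). split; [|split; [nra|]].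
  { split; [apply Rmax_case; lra | apply Rmax_lub_lt; lra]. }
  intros a b. rewrite Cmod_mult.
  pose proof (zgeom_le_Rmax_l s1 s2 a (proj1 Hs1)) as H1.
  pose proof (zgeom_le_Rmax_l s2 s1 b (proj1 Hs2)) as H2. rewrite Rmax_comm in H2.
  pose proof (zgeom_pos s1 a (proj1 Hs1)). pose proof (zgeom_pos s2 b (proj1 Hs2)).
  apply Rle_trans with ((K1 * zgeom s1 a ^ 2) * (K2 * zgeom s2 b ^ 2)).
  - apply Rmult_le_compat; auto using Cmod_ge_0.
  - assert (zgeom s1 a ^ 2 <= zgeom (Rmax s1 s2) a ^ 2) by (apply pow_incr; lra).
    assert (zgeom s2 b ^ 2 <= zgeom (Rmax s1 s2) b ^ 2) by (apply pow_incr; lra).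
    assert (0 <= zgeom s1 a ^ 2) by apply pow2_ge_0.
    assert (0 <= zgeom s2 b ^ 2) by apply pow2_ge_0.
    assert (0 <= K1 * K2) by nra.
    replace (K1 * zgeom s1 a ^ 2 * (K2 * zgeom s2 b ^ 2))
      with ((K1 * K2) * (zgeom s1 a ^ 2 * zgeom s2 b ^ 2)) by ring.
    apply Rmult_le_compat_l; [lra|]. apply Rmult_le_compat; lra.
Qed.

Lemma zgeom_sq_outside_box s N a b : 0 < s < 1 -> ~ In (a, b) (box N) ->
  zgeom s a ^ 2 * zgeom s b ^ 2 <= s ^ S N * (zgeom s a * zgeom s b).
Proof.
  intros Hs Hn. rewrite box_In in Hn.
  pose proof (zgeom_pos s a (proj1 Hs)). pose proof (zgeom_pos s b (proj1 Hs)).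
  pose proof (zgeom_le_1 s a Hs). pose proof (zgeom_le_1 s b Hs).
  assert (Hab : zgeom s a <= s ^ S N \/ zgeom s b <= s ^ S N)
    by (unfold zgeom; destruct (Nat.le_gt_cases (S N) (Z.abs_nat a)) as [L|L];
        [left | right]; apply pow_le_pow_unit; lia || lra).
  destruct Hab as [L|L].
  - assert (zgeom s a ^ 2 <= s ^ S N * zgeom s a) by nra.
    assert (zgeom s b ^ 2 <= zgeom s b) by nra. nra.
  - assert (zgeom s b ^ 2 <= s ^ S N * zgeom s b) by nra.
    assert (zgeom s a ^ 2 <= zgeom s a) by nra. nra.
Qed.

Record box_splitting (phi1 phi2 : Z * Z -> Z * Z) : Prop := {
  splitting_inj1 : forall a a', phi1 a = phi1 a' -> a = a';
  splitting_inj2 : forall a a', phi2 a = phi2 a' -> a = a';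
  splitting_disjoint : forall a a', phi1 a <> phi2 a';
  splitting_range : forall N a, In a (box N) ->
    In (phi1 a) (box (2 * N + 1)) /\ In (phi2 a) (box (2 * N + 1));
  splitting_cover : forall N b, In b (box N) ->
    exists a, In a (box N) /\ (phi1 a = b \/ phi2 a = b) }.

Lemma box_splitting_excess phi1 phi2 N : box_splitting phi1 phi2 ->
  exists r, Permutation (map phi1 (box N) ++ map phi2 (box N)) (box N ++ r) /\ NoDup r /\
            forall b, In b r -> In b (box (2 * N + 1)) /\ ~ In b (box N).
Proof.
  intros [I1 I2 D12 Hrange Hcover].
  assert (HL : NoDup (map phi1 (box N) ++ map phi2 (box N))).
  { apply NoDup_app; try (apply NoDup_map_inj; auto using box_NoDup).
    intros b Hb1 Hb2. apply in_map_iff in Hb1 as [a [<- _]].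
    apply in_map_iff in Hb2 as [a' [E _]]. now apply (D12 a a'). }
  assert (Hincl : incl (box N) (map phi1 (box N) ++ map phi2 (box N))).
  { intros b Hb. destruct (Hcover N b Hb) as [a [Ha [<-|<-]]]; apply in_or_app;
      [left | right]; now apply in_map. }
  destruct (Permutation_complement Zpair_eq_dec _ _ (box_NoDup N) HL Hincl)
    as (r & Hp & Hr & Hrin).
  exists r. split; [exact Hp | split; [exact Hr|]].
  intros b Hb. destruct (Hrin b Hb) as [HbL Hout]. split; [|exact Hout].
  apply in_app_or in HbL as [HbL|HbL]; apply in_map_iff in HbL as [a [<- Ha]];
    apply (Hrange N a Ha).
Qed.

Lemma Cmod_csum_outside_box_le G K s N r : z2bound G K s -> NoDup r ->
  (forall b, In b r -> In b (box (2 * N + 1)) /\ ~ In b (box N)) ->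
  Cmod (csum (map (fun b => G (fst b) (snd b)) r)) <= K * ((1 + s) / (1 - s)) ^ 2 * s ^ S N.
Proof.
  intros (Hs & HK & HG) Hr Hrin.
  set (w := fun b : Z * Z => zgeom s (fst b) * zgeom s (snd b)).
  apply Rle_trans with (rsum (map (fun b => K * s ^ S N * w b) r)).
  { apply Cmod_csum_le. intros [a b] Hab. destruct (Hrin _ Hab) as [_ Hout].
    eapply Rle_trans; [apply HG|]. rewrite Rmult_assoc. apply Rmult_le_compat_l; auto.
    now apply zgeom_sq_outside_box. }
  apply Rle_trans with (rsum (map (fun b => K * s ^ S N * w b) (box (2 * N + 1)))).
  { apply (rsum_map_incl_le Zpair_eq_dec); auto using box_NoDup.
    - intros b Hb. apply (Hrin b Hb).
    - intros b _. unfold w.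
      pose proof (zgeom_pos s (fst b) (proj1 Hs)). pose proof (zgeom_pos s (snd b) (proj1 Hs)).
      pose proof (pow_lt s (S N) (proj1 Hs)).
      apply Rmult_le_pos; apply Rmult_le_pos; lra. }
  rewrite rsum_map_scal. unfold w, box. rewrite (rsum_list_prod (zgeom s) (zgeom s)).
  pose proof (rsum_zgeom_le s (2 * N + 1) Hs).
  pose proof (rsum_map_nonneg (zgeom s) (zrange (2 * N + 1))
                (fun m _ => Rlt_le _ _ (zgeom_pos s m (proj1 Hs)))).
  pose proof (pow_lt s (S N) (proj1 Hs)).
  replace (K * ((1 + s) / (1 - s)) ^ 2 * s ^ S N)
    with (K * s ^ S N * ((1 + s) / (1 - s)) ^ 2) by ring.
  apply Rmult_le_compat_l; [apply Rmult_le_pos; lra|].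
  simpl. rewrite Rmult_1_r. apply Rmult_le_compat; assumption.
Qed.

Section Splitting.
Variables (phi1 phi2 : Z * Z -> Z * Z).
Hypothesis Hsplit : box_splitting phi1 phi2.
Variable G : Z -> Z -> C.

Lemma z2partial_split_error K s N : z2bound G K s ->
  Cmod (csum (map (fun a => G (fst (phi1 a)) (snd (phi1 a))) (box N))
        + csum (map (fun a => G (fst (phi2 a)) (snd (phi2 a))) (box N)) - z2partial G N)%C
  <= K * ((1 + s) / (1 - s)) ^ 2 * s ^ S N.
Proof.
  intros HG. destruct (box_splitting_excess phi1 phi2 N Hsplit) as (r & Hp & Hr & Hrin).
  set (Gp := fun b : Z * Z => G (fst b) (snd b)).
  replace (_ - z2partial G N)%C with (csum (map Gp r)).
  { now apply Cmod_csum_outside_box_le. }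
  transitivity (csum (map Gp (map phi1 (box N) ++ map phi2 (box N))) - z2partial G N)%C.
  - rewrite (csum_Permutation _ _ (Permutation_map Gp Hp)), map_app, csum_app.
    unfold z2partial. fold Gp. ring.
  - now rewrite map_app, csum_app, !map_map.
Qed.

Variables (f1 h1 f2 h2 : Z -> C).
Hypothesis Hfactor1 : forall k l, G (fst (phi1 (k, l))) (snd (phi1 (k, l))) = (f1 k * h1 l)%C.
Hypothesis Hfactor2 : forall k l, G (fst (phi2 (k, l))) (snd (phi2 (k, l))) = (f2 k * h2 l)%C.
Hypotheses (Hf1 : zdominated f1) (Hh1 : zdominated h1) (Hf2 : zdominated f2) (Hh2 : zdominated h2).

Lemma z2partial_split_is_clim : z2dominated G ->
  is_clim (z2partial G) (zsum f1 * zsum h1 + zsum f2 * zsum h2)%C.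
Proof.
  intros (K & s & HG). pose proof HG as (Hs & _).
  apply (is_clim_approx _
           (fun N => zpartial f1 N * zpartial h1 N + zpartial f2 N * zpartial h2 N)%C _
           (fun N => K * ((1 + s) / (1 - s)) ^ 2 * s * s ^ N));
    [| apply is_lim_seq_scal_geom; lra
     | apply is_clim_plus; apply is_clim_mult; now apply zsum_is_clim].
  intros N.
  replace (K * ((1 + s) / (1 - s)) ^ 2 * s * s ^ N) with (K * ((1 + s) / (1 - s)) ^ 2 * s ^ S N)
    by (simpl; ring).
  eapply Rle_trans; [|apply (z2partial_split_error K s N HG)].
  rewrite <- !z2partial_mul. unfold z2partial.
  rewrite (map_ext (fun a => G (fst (phi1 a)) (snd (phi1 a))) (fun b => f1 (fst b) * h1 (snd b))%C)
    by (intros [k l]; apply Hfactor1).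
  rewrite (map_ext (fun a => G (fst (phi2 a)) (snd (phi2 a))) (fun b => f2 (fst b) * h2 (snd b))%C)
    by (intros [k l]; apply Hfactor2).
  rewrite <- Cmod_opp. right. f_equal. ring.
Qed.

Lemma z2sum_split : z2dominated G -> z2sum G = (zsum f1 * zsum h1 + zsum f2 * zsum h2)%C.
Proof. intros HG. rewrite z2sum_eq_clim. now apply is_clim_unique, z2partial_split_is_clim. Qed.

End Splitting.

Lemma zsum_mul_split phi1 phi2 g h f1 h1 f2 h2 :
  box_splitting phi1 phi2 ->
  (forall k l, g (fst (phi1 (k, l))) * h (snd (phi1 (k, l))) = f1 k * h1 l)%C ->
  (forall k l, g (fst (phi2 (k, l))) * h (snd (phi2 (k, l))) = f2 k * h2 l)%C ->
  zdominated g -> zdominated h ->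
  zdominated f1 -> zdominated h1 -> zdominated f2 -> zdominated h2 ->
  (zsum g * zsum h = zsum f1 * zsum h1 + zsum f2 * zsum h2)%C.
Proof.
  intros Hsplit F1 F2 Hg Hh Hf1 Hh1 Hf2 Hh2.
  transitivity (clim (fun N => zpartial g N * zpartial h N)%C).
  - symmetry. apply is_clim_unique, is_clim_mult; now apply zsum_is_clim.
  - apply is_clim_unique, is_clim_ext with (z2partial (fun a b => g a * h b)%C);
      [intros; symmetry; apply z2partial_mul|].
    apply (z2partial_split_is_clim phi1 phi2); auto using z2dominated_mul.
Qed.

Definition sum_diff (a : Z * Z) : Z * Z := let '(k, l) := a in ((k + l)%Z, (k - l)%Z).
Definition sum1_diff (a : Z * Z) : Z * Z := let '(k, l) := a in ((k + l + 1)%Z, (k - l)%Z).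
Definition sum_diff1 (a : Z * Z) : Z * Z := let '(k, l) := a in ((k + l)%Z, (k - l - 1)%Z).

Lemma box_splitting_sum1_diff : box_splitting sum_diff sum1_diff.
Proof.
  split.
  - intros [k l] [k' l'] [= E1 E2]. f_equal; lia.
  - intros [k l] [k' l'] [= E1 E2]. f_equal; lia.
  - intros [k l] [k' l'] [= E1 E2]. lia.
  - intros N [k l]. simpl. rewrite !box_In. lia.
  - intros N [m1 m2] Hb. rewrite box_In in Hb.
    destruct (Z.Even_or_Odd (m1 + m2)) as [[j Hj]|[j Hj]];
      exists (j, (j - m2)%Z); rewrite box_In; split; try lia; [left | right]; simpl; f_equal; lia.
Qed.

Lemma box_splitting_sum_diff1 : box_splitting sum_diff sum_diff1.
Proof.
  split.
  - intros [k l] [k' l'] [= E1 E2]. f_equal; lia.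
  - intros [k l] [k' l'] [= E1 E2]. f_equal; lia.
  - intros [k l] [k' l'] [= E1 E2]. lia.
  - intros N [k l]. simpl. rewrite !box_In. lia.
  - intros N [m1 m2] Hb. rewrite box_In in Hb.
    destruct (Z.Even_or_Odd (m1 + m2)) as [[j Hj]|[j Hj]].
    + exists (j, (j - m2)%Z). rewrite box_In. split; [lia | left; simpl; f_equal; lia].
    + exists ((j + 1)%Z, (m1 - j - 1)%Z). rewrite box_In. split; [lia | right; simpl; f_equal; lia].
Qed.

Lemma z2sum_swap G : z2sum (fun a b => G b a) = z2sum G.
Proof.
  rewrite !z2sum_eq_clim. f_equal. apply functional_extensionality. intros N. unfold z2partial.
  set (swap := fun b : Z * Z => (snd b, fst b)).
  assert (Hp : Permutation (map swap (box N)) (box N)).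
  { apply Permutation_map_same_l.
    - apply NoDup_map_inj; [intros [a b] [a' b'] [= -> ->]; reflexivity | apply box_NoDup].
    - intros b Hb. apply in_map_iff in Hb as [[a a'] [<- Ha]]. unfold swap; simpl.
      rewrite box_In in *. tauto. }
  rewrite <- (csum_Permutation _ _ (Permutation_map (fun b => G (fst b) (snd b)) Hp)), map_map.
  reflexivity.
Qed.

(** * Genus one theta series *)

Lemma cexp_add a b : cexp (a + b)%C = (cexp a * cexp b)%C.
Proof.
  destruct a as [a1 a2], b as [b1 b2]. unfold cexp, Re, Im. simpl.
  rewrite exp_plus, cos_plus, sin_plus. unfold Cmult; simpl. f_equal; ring.
Qed.

Lemma Cmod_cexp z : Cmod (cexp z) = exp (Re z).
Proof.
  unfold cexp, Cmod. cbn [fst snd].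
  replace ((exp (Re z) * cos (Im z)) ^ 2 + (exp (Re z) * sin (Im z)) ^ 2) with (exp (Re z) ^ 2).
  - apply sqrt_pow2, Rlt_le, exp_pos.
  - pose proof (sin2_cos2 (Im z)) as H. unfold Rsqr in H. nra.
Qed.

Lemma cexp_neq_0 z : cexp z <> 0%C.
Proof.
  intros H. pose proof (Cmod_cexp z) as E. rewrite H, Cmod_0 in E.
  pose proof (exp_pos (Re z)). lra.
Qed.

Lemma cexp_i_mul r : cexp (Ci * RtoC r) = (cos r, sin r).
Proof.
  unfold cexp, Re, Im, Ci, RtoC, Cmult. simpl.
  replace (0 * r - 1 * 0) with 0 by ring. replace (0 * 0 + 1 * r) with r by ring.
  now rewrite exp_0, !Rmult_1_l.
Qed.

Definition zsign (j : Z) : C := if Z.even j then 1%C else (-1)%C.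

Lemma zsign_succ j : zsign (Z.succ j) = (- zsign j)%C.
Proof. unfold zsign. rewrite Z.even_succ, <- Z.negb_even. destruct (Z.even j); simpl; ring. Qed.

Lemma cexp_i_pi_mul j : cexp (Ci * RtoC (PI * IZR j)) = zsign j.
Proof.
  rewrite cexp_i_mul. induction j using Z.peano_ind.
  - rewrite Rmult_0_r, cos_0, sin_0. reflexivity.
  - rewrite succ_IZR, zsign_succ, <- IHj.
    replace (PI * (IZR j + 1)) with (PI * IZR j + PI) by ring.
    rewrite neg_cos, neg_sin. unfold Copp. simpl. f_equal; ring.
  - rewrite <- (Z.succ_pred j), zsign_succ, succ_IZR in IHj.
    replace (PI * (IZR (Z.pred j) + 1)) with (PI * IZR (Z.pred j) + PI) in IHj by ring.
    rewrite neg_cos, neg_sin in IHj. unfold zsign in *. destruct (Z.even (Z.pred j));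
      unfold Copp, RtoC in *; simpl in *; injection IHj; intros; f_equal; lra.
Qed.

Lemma cexp_add_i_pi_mul z j : cexp (z + Ci * RtoC (PI * IZR j))%C = (zsign j * cexp z)%C.
Proof. rewrite cexp_add, cexp_i_pi_mul. ring. Qed.

Lemma powerRZ_m1 j : RtoC (powerRZ (-1) j) = zsign j.
Proof.
  induction j using Z.peano_ind.
  - reflexivity.
  - rewrite <- Z.add_1_r, powerRZ_add, RtoC_mult, IHj, Z.add_1_r, zsign_succ by lra.
    unfold RtoC, Copp, Cmult. simpl. f_equal; ring.
  - rewrite <- (Z.succ_pred j), zsign_succ, <- Z.add_1_r, powerRZ_add in IHj by lra.
    simpl in IHj. unfold zsign in *. destruct (Z.even (Z.pred j));
      unfold Copp, RtoC in *; simpl in *; injection IHj; intros; f_equal; lra.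
Qed.

Lemma Cmod_zsign j : Cmod (zsign j) = 1.
Proof.
  unfold zsign. destruct (Z.even j); [apply Cmod_1|]. rewrite Cmod_R, Rabs_left; lra.
Qed.

Ltac zsign_parity :=
  unfold zsign; rewrite ?Z.even_add, ?Z.even_sub, ?Z.even_opp; simpl Z.even;
  repeat match goal with |- context [Z.even ?k] => destruct (Z.even k) end; simpl.

Lemma zbound_zsign g K s : zbound g K s -> zbound (fun k => zsign k * g k)%C K s.
Proof.
  intros (Hs & HK & Hg). split; [|split]; auto.
  intros m. rewrite Cmod_mult, Cmod_zsign, Rmult_1_l. apply Hg.
Qed.

Lemma sqr_shift_ge m h : 0 <= h <= 1 -> Rabs (IZR m) - 1 <= (IZR m + h) ^ 2.
Proof.
  intros Hh. destruct (Z_lt_le_dec m 0) as [L|L].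
  - assert (IZR m = -1 \/ IZR m <= -2) as [E|E]
      by (destruct (Z.eq_dec m (-1)); [left; subst; reflexivity | right; apply IZR_le; lia]);
      rewrite Rabs_left by lra; [rewrite E|]; nra.
  - assert (0 <= IZR m) by (apply IZR_le; lia). rewrite Rabs_right by lra. nra.
Qed.

Lemma exp_le_compat x y : x <= y -> exp x <= exp y.
Proof. intros [L|<-]; [now left; apply exp_increasing | now right]. Qed.

Lemma exp_pow_INR a n : exp a ^ n = exp (INR n * a).
Proof.
  induction n; [simpl; now rewrite Rmult_0_l, exp_0|].
  rewrite S_INR. simpl pow. rewrite IHn, <- exp_plus. f_equal. ring.
Qed.

(* With s = exp (- pi T / 2), s^(2|m|) is the Gaussian weight exp (- pi T |m|). *)
Lemma gaussian_le_zgeom T h m : 0 < T -> 0 <= h <= 1 ->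
  exp (- (PI * T * (IZR m + h) ^ 2)) <= exp (PI * T) * zgeom (exp (- (PI * T / 2))) m ^ 2.
Proof.
  intros HT Hh. unfold zgeom. rewrite !exp_pow_INR, <- exp_plus. apply exp_le_compat.
  rewrite (INR_IZR_INZ (Z.abs_nat m)), Znat.Zabs2Nat.id_abs, abs_IZR.
  pose proof (sqr_shift_ge m h Hh). pose proof PI_RGT_0.
  assert (0 < PI * T) by nra. simpl INR. nra.
Qed.

Definition theta_term (t : C) (h : R) (k : Z) : C := cexp (PI * Ci * t * RtoC ((IZR k + h) ^ 2)).

Definition theta_c (h : R) (t : C) : C := zsum (theta_term t h).
Definition theta_s (h : R) (t : C) : C := zsum (fun k => zsign k * theta_term t h k)%C.

Lemma Cmod_theta_term t h k : Cmod (theta_term t h k) = exp (- (PI * Im t * (IZR k + h) ^ 2)).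
Proof.
  unfold theta_term. rewrite Cmod_cexp. f_equal.
  destruct t as [a b]. unfold Re, Im, RtoC, Cmult, Ci. simpl. ring.
Qed.

Lemma theta_term_bound t h : 0 < Im t -> 0 <= h <= 1 ->
  zbound (theta_term t h) (exp (PI * Im t)) (exp (- (PI * Im t / 2))).
Proof.
  intros Ht Hh. pose proof PI_RGT_0. split; [|split].
  - split; [apply exp_pos|]. rewrite <- exp_0. apply exp_increasing. nra.
  - apply Rlt_le, exp_pos.
  - intros m. rewrite Cmod_theta_term. now apply gaussian_le_zgeom.
Qed.

Lemma theta_term_zdominated t h : 0 < Im t -> 0 <= h <= 1 -> zdominated (theta_term t h).
Proof. intros Ht Hh. do 2 eexists. now apply theta_term_bound. Qed.

Lemma zsign_theta_term_zdominated t h : 0 < Im t -> 0 <= h <= 1 ->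
  zdominated (fun k => zsign k * theta_term t h k)%C.
Proof. intros Ht Hh. do 2 eexists. now apply zbound_zsign, theta_term_bound. Qed.

Lemma theta_term_mul t h1 h2 h3 h4 n m k l :
  (IZR n + h1) ^ 2 + (IZR m + h2) ^ 2 = 2 * (IZR k + h3) ^ 2 + 2 * (IZR l + h4) ^ 2 ->
  (theta_term t h1 n * theta_term t h2 m = theta_term (2 * t) h3 k * theta_term (2 * t) h4 l)%C.
Proof.
  intros H. unfold theta_term. rewrite <- !cexp_add. f_equal.
  transitivity (PI * Ci * t * RtoC ((IZR n + h1) ^ 2 + (IZR m + h2) ^ 2))%C.
  - rewrite RtoC_plus. ring.
  - rewrite H, RtoC_plus, !RtoC_mult. ring.
Qed.

Lemma theta_term_eq_div t h1 h2 h3 h4 n m k l :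
  (IZR n + h1) ^ 2 + (IZR m + h2) ^ 2 = 2 * (IZR k + h3) ^ 2 + 2 * (IZR l + h4) ^ 2 ->
  theta_term t h2 m = (theta_term (2 * t) h3 k * theta_term (2 * t) h4 l / theta_term t h1 n)%C.
Proof.
  intros H. rewrite <- (theta_term_mul t h1 h2 h3 h4 n m k l H). field. apply cexp_neq_0.
Qed.

Lemma theta_term_reflect t h k : theta_term t (1 - h) (-1 - k) = theta_term t h k.
Proof. unfold theta_term. do 3 f_equal. rewrite minus_IZR. ring. Qed.

Lemma zsign_reflect k : zsign (-1 - k) = (- zsign k)%C.
Proof. zsign_parity; ring. Qed.

Lemma theta_c_reflect t h : 0 < Im t -> 0 <= h <= 1 -> theta_c (1 - h) t = theta_c h t.
Proof.
  intros Ht Hh. unfold theta_c.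
  rewrite <- (zsum_reflect (theta_term t (1 - h))) by (apply theta_term_zdominated; lra).
  f_equal. apply functional_extensionality. apply theta_term_reflect.
Qed.

Lemma theta_s_reflect t h : 0 < Im t -> 0 <= h <= 1 -> theta_s (1 - h) t = (- theta_s h t)%C.
Proof.
  intros Ht Hh. unfold theta_s.
  rewrite <- (zsum_reflect (fun k => zsign k * theta_term t (1 - h) k)%C)
    by (apply zsign_theta_term_zdominated; lra).
  rewrite <- zsum_opp by (apply zsign_theta_term_zdominated; lra).
  f_equal. apply functional_extensionality. intros k.
  rewrite zsign_reflect, theta_term_reflect. ring.
Qed.

Lemma theta_s_half t : 0 < Im t -> theta_s (/2) t = 0%C.
Proof.
  intros Ht. pose proof (theta_s_reflect t (/2) Ht ltac:(lra)) as H.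
  replace (1 - /2) with (/2) in H by field.
  destruct (theta_s (/2) t) as [a b]. unfold Copp in H. simpl in H. injection H as Ha Hb.
  unfold RtoC. f_equal; lra.
Qed.

Lemma theta2_eq t : theta2 t = theta_c (/2) t.
Proof. reflexivity. Qed.

Lemma theta3_eq t : theta3 t = theta_c 0 t.
Proof.
  unfold theta3, theta_c. f_equal. apply functional_extensionality. intros n.
  unfold theta_term. now rewrite Rplus_0_r.
Qed.

Lemma theta4_eq t : theta4 t = theta_s 0 t.
Proof.
  unfold theta4, theta_s. f_equal. apply functional_extensionality. intros n.
  unfold theta_term. now rewrite Rplus_0_r, powerRZ_m1.
Qed.

Lemma Im_double_pos t : 0 < Im t -> 0 < Im (2 * t)%C.
Proof. destruct t as [a b]. unfold Im. simpl. lra. Qed.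

Ltac theta_dominated :=
  repeat apply zdominated_opp;
  first [apply theta_term_zdominated | apply zsign_theta_term_zdominated];
  [first [assumption | now apply Im_double_pos] | lra].

Ltac char_arith :=
  cbn [sum_diff sum1_diff sum_diff1 fst snd half]; rewrite ?plus_IZR, ?minus_IZR; field.

Section Duplication.
Variable x : C.
Hypothesis hx : 0 < Im x.

Lemma theta_c_mul_theta_c0 h : 0 <= h <= 1 ->
  (theta_c h x * theta_c 0 x = theta_c (h / 2) (2 * x) * theta_c (h / 2) (2 * x)
                               + theta_c ((1 + h) / 2) (2 * x) * theta_c ((1 + h) / 2) (2 * x))%C.
Proof.
  intros Hh. apply (zsum_mul_split sum_diff sum1_diff); try apply box_splitting_sum1_diff;
    try theta_dominated; intros k l; apply theta_term_mul; char_arith.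
Qed.

Lemma theta_c_mul_theta_s0 h : 0 <= h <= 1 ->
  (theta_c h x * theta_s 0 x = theta_s (h / 2) (2 * x) * theta_s (h / 2) (2 * x)
                               + theta_s ((1 + h) / 2) (2 * x) * theta_s ((1 + h) / 2) (2 * x))%C.
Proof.
  intros Hh. apply (zsum_mul_split sum_diff sum1_diff); try apply box_splitting_sum1_diff;
    try theta_dominated; intros k l; cbn [sum_diff sum1_diff fst snd].
  - rewrite (theta_term_eq_div x h 0 (h / 2) (h / 2) (k + l) (k - l) k l) by char_arith.
    zsign_parity; field; apply cexp_neq_0.
  - rewrite (theta_term_eq_div x h 0 ((1 + h) / 2) ((1 + h) / 2) (k + l + 1) (k - l) k l)
      by char_arith.
    zsign_parity; field; apply cexp_neq_0.
Qed.

Lemma theta_s_mul_theta_s0 h : 0 <= h <= 1 ->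
  (theta_s h x * theta_s 0 x = theta_c (h / 2) (2 * x) * theta_c (h / 2) (2 * x)
                               - theta_c ((1 + h) / 2) (2 * x) * theta_c ((1 + h) / 2) (2 * x))%C.
Proof.
  intros Hh.
  transitivity (theta_c (h / 2) (2 * x) * theta_c (h / 2) (2 * x)
    + zsum (fun k => - theta_term (2 * x) ((1 + h) / 2) k) * theta_c ((1 + h) / 2) (2 * x))%C.
  2: { rewrite zsum_opp by theta_dominated. unfold theta_c. ring. }
  apply (zsum_mul_split sum_diff sum1_diff); try apply box_splitting_sum1_diff;
    try theta_dominated; intros k l; cbn [sum_diff sum1_diff fst snd].
  - rewrite (theta_term_eq_div x h 0 (h / 2) (h / 2) (k + l) (k - l) k l) by char_arith.
    zsign_parity; field; apply cexp_neq_0.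
  - rewrite (theta_term_eq_div x h 0 ((1 + h) / 2) ((1 + h) / 2) (k + l + 1) (k - l) k l)
      by char_arith.
    zsign_parity; field; apply cexp_neq_0.
Qed.

Lemma theta3_mul_theta3 :
  (theta3 x * theta3 x = theta_c 0 (2 * x) * theta_c 0 (2 * x)
                         + theta_c (/2) (2 * x) * theta_c (/2) (2 * x))%C.
Proof.
  rewrite theta3_eq, (theta_c_mul_theta_c0 0) by lra.
  replace (0 / 2) with 0 by field. now replace ((1 + 0) / 2) with (/2) by field.
Qed.

Lemma theta4_mul_theta4 :
  (theta4 x * theta4 x = theta_c 0 (2 * x) * theta_c 0 (2 * x)
                         - theta_c (/2) (2 * x) * theta_c (/2) (2 * x))%C.
Proof.
  rewrite theta4_eq, (theta_s_mul_theta_s0 0) by lra.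
  replace (0 / 2) with 0 by field. now replace ((1 + 0) / 2) with (/2) by field.
Qed.

Lemma theta3_mul_theta4 : (theta3 x * theta4 x = theta_s 0 (2 * x) * theta_s 0 (2 * x))%C.
Proof.
  rewrite theta3_eq, theta4_eq, (theta_c_mul_theta_s0 0) by lra.
  replace (0 / 2) with 0 by field. replace ((1 + 0) / 2) with (/2) by field.
  rewrite theta_s_half by now apply Im_double_pos. ring.
Qed.

Lemma theta2_mul_theta3 :
  (theta2 x * theta3 x = 2 * (theta_c (/4) (2 * x) * theta_c (/4) (2 * x)))%C.
Proof.
  rewrite theta2_eq, theta3_eq, (theta_c_mul_theta_c0 (/2)) by lra.
  replace (/2 / 2) with (/4) by field. replace ((1 + /2) / 2) with (1 - /4) by field.
  rewrite theta_c_reflect by first [now apply Im_double_pos | lra]. ring.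
Qed.

Lemma theta2_mul_theta4 :
  (theta2 x * theta4 x = 2 * (theta_s (/4) (2 * x) * theta_s (/4) (2 * x)))%C.
Proof.
  rewrite theta2_eq, theta4_eq, (theta_c_mul_theta_s0 (/2)) by lra.
  replace (/2 / 2) with (/4) by field. replace ((1 + /2) / 2) with (1 - /4) by field.
  rewrite theta_s_reflect by first [now apply Im_double_pos | lra]. ring.
Qed.

End Duplication.

(** * Genus two theta constants at B *)

Definition Theta_term (b11 b12 b21 b22 : C) (p1 p2 q1 q2 : bool) (m1 m2 : Z) : C :=
  let v1 := (IZR m1 + half p1)%R in
  let v2 := (IZR m2 + half p2)%R in
  let Q := (b11 * RtoC (v1 * v1) + b12 * RtoC (v2 * v1)
            + b21 * RtoC (v1 * v2) + b22 * RtoC (v2 * v2))%C in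
  cexp (PI * Ci * Q + 2 * PI * Ci * RtoC (v1 * half q1 + v2 * half q2))%C.

Lemma Theta_eq_z2sum b11 b12 b21 b22 p1 p2 q1 q2 :
  Theta b11 b12 b21 b22 p1 p2 q1 q2 = z2sum (Theta_term b11 b12 b21 b22 p1 p2 q1 q2).
Proof. reflexivity. Qed.

Lemma Theta_swap b11 b12 b21 b22 p1 p2 q1 q2 :
  Theta b11 b12 b21 b22 p1 p2 q1 q2 = Theta b22 b21 b12 b11 p2 p1 q2 q1.
Proof.
  rewrite !Theta_eq_z2sum, <- (z2sum_swap (Theta_term b22 b21 b12 b11 p2 p1 q2 q1)).
  f_equal. do 2 (apply functional_extensionality; intros). unfold Theta_term. f_equal.
  rewrite !RtoC_plus, !RtoC_mult. ring.
Qed.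

Section GenusTwo.
Variables x y : C.
Hypotheses (hx : 0 < Im x) (hy : 0 < Im y).

Definition Theta_B (p1 p2 q1 q2 : bool) : C :=
  Theta ((/2) * (x + y)) ((/2) * (x - y)) ((/2) * (x - y)) ((/2) * (x + y)) p1 p2 q1 q2.

Definition Theta_B_term (p1 p2 q1 q2 : bool) : Z -> Z -> C :=
  Theta_term ((/2) * (x + y)) ((/2) * (x - y)) ((/2) * (x - y)) ((/2) * (x + y)) p1 p2 q1 q2.

Lemma Theta_B_exponent v1 v2 w :
  (PI * Ci * ((/2) * (x + y) * RtoC (v1 * v1) + (/2) * (x - y) * RtoC (v2 * v1)
              + (/2) * (x - y) * RtoC (v1 * v2) + (/2) * (x + y) * RtoC (v2 * v2))
   + 2 * PI * Ci * RtoC w)%C =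
  (PI * Ci * (2 * x) * RtoC (((v1 + v2) / 2) ^ 2) + PI * Ci * (2 * y) * RtoC (((v1 - v2) / 2) ^ 2)
   + Ci * RtoC (PI * (2 * w)))%C.
Proof.
  destruct x as [a b], y as [c d]. unfold Cminus, Copp, RtoC, Cmult, Cplus, Cinv, Ci.
  cbn [fst snd]. f_equal; field.
Qed.

Lemma Theta_B_term_factor p1 p2 q1 q2 m1 m2 k l h1 h2 j :
  (IZR m1 + half p1 + (IZR m2 + half p2)) / 2 = IZR k + h1 ->
  ((IZR m1 + half p1 - (IZR m2 + half p2)) / 2) ^ 2 = (IZR l + h2) ^ 2 ->
  2 * ((IZR m1 + half p1) * half q1 + (IZR m2 + half p2) * half q2) = IZR j ->
  Theta_B_term p1 p2 q1 q2 m1 m2 = (zsign j * theta_term (2 * x) h1 k * theta_term (2 * y) h2 l)%C.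
Proof.
  intros H1 H2 H3. unfold Theta_B_term, Theta_term. cbv zeta.
  rewrite Theta_B_exponent, H1, H2, H3, cexp_add_i_pi_mul, cexp_add. unfold theta_term. ring.
Qed.

Lemma Cmod_Theta_B_term p1 p2 q1 q2 m1 m2 :
  let v1 := IZR m1 + half p1 in
  let v2 := IZR m2 + half p2 in
  Cmod (Theta_B_term p1 p2 q1 q2 m1 m2)
  = exp (- (PI * (2 * Im x) * ((v1 + v2) / 2) ^ 2) - PI * (2 * Im y) * ((v1 - v2) / 2) ^ 2).
Proof.
  intros v1 v2. unfold Theta_B_term, Theta_term. cbv zeta. fold v1 v2.
  rewrite Theta_B_exponent, Cmod_cexp. f_equal.
  destruct x as [a b], y as [c d]. unfold Re, Im, RtoC, Cmult, Cplus, Ci. cbn [fst snd]. ring.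
Qed.

Lemma Theta_B_term_z2dominated p1 p2 q1 q2 : z2dominated (Theta_B_term p1 p2 q1 q2).
Proof.
  set (T := Rmin (Im x) (Im y)).
  assert (HT : 0 < T) by (apply Rmin_glb_lt; auto).
  assert (Tx : T <= Im x) by apply Rmin_l. assert (Ty : T <= Im y) by apply Rmin_r.
  pose proof PI_RGT_0.
  exists (exp (PI * T) * exp (PI * T)), (exp (- (PI * T / 2))). split; [|split].
  - split; [apply exp_pos|]. rewrite <- exp_0. apply exp_increasing. nra.
  - apply Rlt_le, Rmult_lt_0_compat; apply exp_pos.
  - intros m1 m2. rewrite Cmod_Theta_B_term.
    set (v1 := IZR m1 + half p1). set (v2 := IZR m2 + half p2).
    assert (Hh : forall b, 0 <= half b <= 1) by (intros []; simpl; lra).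
    pose proof (gaussian_le_zgeom T (half p1) m1 HT (Hh p1)) as G1.
    pose proof (gaussian_le_zgeom T (half p2) m2 HT (Hh p2)) as G2. fold v1 in G1. fold v2 in G2.
    apply Rle_trans with (exp (- (PI * T * v1 ^ 2)) * exp (- (PI * T * v2 ^ 2))).
    + rewrite <- exp_plus. apply exp_le_compat.
      assert (0 <= (Im x - T) * ((v1 + v2) / 2) ^ 2)
        by (apply Rmult_le_pos; [lra | apply pow2_ge_0]).
      assert (0 <= (Im y - T) * ((v1 - v2) / 2) ^ 2)
        by (apply Rmult_le_pos; [lra | apply pow2_ge_0]).
      assert (((v1 + v2) / 2) ^ 2 + ((v1 - v2) / 2) ^ 2 = (v1 ^ 2 + v2 ^ 2) / 2) by field.
      nra.
    + eapply Rle_trans; [apply Rmult_le_compat; try apply Rlt_le, exp_pos; [apply G1 | apply G2]|].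
      right. ring.
Qed.

Lemma Theta_B_split phi1 phi2 p1 p2 q1 q2 f1 h1 f2 h2 :
  box_splitting phi1 phi2 ->
  (forall k l,
     Theta_B_term p1 p2 q1 q2 (fst (phi1 (k, l))) (snd (phi1 (k, l))) = (f1 k * h1 l)%C) ->
  (forall k l,
     Theta_B_term p1 p2 q1 q2 (fst (phi2 (k, l))) (snd (phi2 (k, l))) = (f2 k * h2 l)%C) ->
  zdominated f1 -> zdominated h1 -> zdominated f2 -> zdominated h2 ->
  Theta_B p1 p2 q1 q2 = (zsum f1 * zsum h1 + zsum f2 * zsum h2)%C.
Proof.
  intros. unfold Theta_B. rewrite Theta_eq_z2sum.
  apply (z2sum_split phi1 phi2); auto using Theta_B_term_z2dominated.
Qed.

Lemma Theta_B_swap p1 p2 q1 q2 : Theta_B p1 p2 q1 q2 = Theta_B p2 p1 q2 q1.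
Proof. apply Theta_swap. Qed.

(* In Theta_B_abcd the digits are p1 p2 q1 q2, with 1 standing for 1/2. *)
Lemma Theta_B_0000 : Theta_B false false false false =
  (theta_c 0 (2 * x) * theta_c 0 (2 * y) + theta_c (/2) (2 * x) * theta_c (/2) (2 * y))%C.
Proof.
  apply (Theta_B_split sum_diff sum1_diff); try apply box_splitting_sum1_diff; try theta_dominated;
    intros k l.
  - rewrite (Theta_B_term_factor _ _ _ _ _ _ k l 0 0 0) by char_arith. zsign_parity; ring.
  - rewrite (Theta_B_term_factor _ _ _ _ _ _ k l (/2) (/2) 0) by char_arith. zsign_parity; ring.
Qed.

Lemma Theta_B_0011 : Theta_B false false true true =
  (theta_c 0 (2 * x) * theta_c 0 (2 * y) - theta_c (/2) (2 * x) * theta_c (/2) (2 * y))%C.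
Proof.
  transitivity (theta_c 0 (2 * x) * theta_c 0 (2 * y)
    + zsum (fun k => - theta_term (2 * x) (/2) k) * theta_c (/2) (2 * y))%C.
  2: { rewrite zsum_opp by theta_dominated. unfold theta_c. ring. }
  apply (Theta_B_split sum_diff sum1_diff); try apply box_splitting_sum1_diff; try theta_dominated;
    intros k l.
  - rewrite (Theta_B_term_factor _ _ _ _ _ _ k l 0 0 (k + k)) by char_arith. zsign_parity; ring.
  - rewrite (Theta_B_term_factor _ _ _ _ _ _ k l (/2) (/2) (k + k + 1)) by char_arith.
    zsign_parity; ring.
Qed.

Lemma Theta_B_0010 : Theta_B false false true false = (theta_s 0 (2 * x) * theta_s 0 (2 * y))%C.
Proof.
  transitivity (theta_s 0 (2 * x) * theta_s 0 (2 * y)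
    + zsum (fun k => - (zsign k * theta_term (2 * x) (/2) k)) * theta_s (/2) (2 * y))%C.
  2: { rewrite theta_s_half by now apply Im_double_pos. ring. }
  apply (Theta_B_split sum_diff sum1_diff); try apply box_splitting_sum1_diff; try theta_dominated;
    intros k l.
  - rewrite (Theta_B_term_factor _ _ _ _ _ _ k l 0 0 (k + l)) by char_arith. zsign_parity; ring.
  - rewrite (Theta_B_term_factor _ _ _ _ _ _ k l (/2) (/2) (k + l + 1)) by char_arith.
    zsign_parity; ring.
Qed.

Lemma Theta_B_1000 : Theta_B true false false false =
  (2 * (theta_c (/4) (2 * x) * theta_c (/4) (2 * y)))%C.
Proof.
  transitivity (theta_c (/4) (2 * x) * theta_c (/4) (2 * y)
    + theta_c (1 - /4) (2 * x) * theta_c (1 - /4) (2 * y))%C.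
  2: { rewrite !theta_c_reflect by first [now apply Im_double_pos | lra]. ring. }
  apply (Theta_B_split sum_diff sum1_diff); try apply box_splitting_sum1_diff; try theta_dominated;
    intros k l.
  - rewrite (Theta_B_term_factor _ _ _ _ _ _ k l (/4) (/4) 0) by char_arith. zsign_parity; ring.
  - rewrite (Theta_B_term_factor _ _ _ _ _ _ k l (1 - /4) (1 - /4) 0) by char_arith.
    zsign_parity; ring.
Qed.

Lemma Theta_B_1001 : Theta_B true false false true =
  (2 * (theta_s (/4) (2 * x) * theta_s (/4) (2 * y)))%C.
Proof.
  transitivity (theta_s (/4) (2 * x) * theta_s (/4) (2 * y)
    + theta_s (1 - /4) (2 * x) * theta_s (1 - /4) (2 * y))%C.
  2: { rewrite !theta_s_reflect by first [now apply Im_double_pos | lra]. ring. }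
  apply (Theta_B_split sum_diff sum1_diff); try apply box_splitting_sum1_diff; try theta_dominated;
    intros k l.
  - rewrite (Theta_B_term_factor _ _ _ _ _ _ k l (/4) (/4) (k - l)) by char_arith.
    zsign_parity; ring.
  - rewrite (Theta_B_term_factor _ _ _ _ _ _ k l (1 - /4) (1 - /4) (k - l)) by char_arith.
    zsign_parity; ring.
Qed.

Lemma Theta_B_1100 : Theta_B true true false false =
  (theta_c (/2) (2 * x) * theta_c 0 (2 * y) + theta_c 0 (2 * x) * theta_c (/2) (2 * y))%C.
Proof.
  apply (Theta_B_split sum_diff sum_diff1); try apply box_splitting_sum_diff1; try theta_dominated;
    intros k l.
  - rewrite (Theta_B_term_factor _ _ _ _ _ _ k l (/2) 0 0) by char_arith. zsign_parity; ring.
  - rewrite (Theta_B_term_factor _ _ _ _ _ _ k l 0 (/2) 0) by char_arith. zsign_parity; ring.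
Qed.

Lemma Theta_B_1111 : Theta_B true true true true =
  (- (theta_c (/2) (2 * x) * theta_c 0 (2 * y)) + theta_c 0 (2 * x) * theta_c (/2) (2 * y))%C.
Proof.
  transitivity (zsum (fun k => - theta_term (2 * x) (/2) k) * theta_c 0 (2 * y)
    + theta_c 0 (2 * x) * theta_c (/2) (2 * y))%C.
  2: { rewrite zsum_opp by theta_dominated. unfold theta_c. ring. }
  apply (Theta_B_split sum_diff sum_diff1); try apply box_splitting_sum_diff1; try theta_dominated;
    intros k l.
  - rewrite (Theta_B_term_factor _ _ _ _ _ _ k l (/2) 0 (k + k + 1)) by char_arith.
    zsign_parity; ring.
  - rewrite (Theta_B_term_factor _ _ _ _ _ _ k l 0 (/2) (k + k)) by char_arith. zsign_parity; ring.
Qed.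

End GenusTwo.

(** * The product of the ten even theta constants *)

Definition Theta_B_prod (x y : C) : C :=
  (Theta_B x y true true true true * Theta_B x y true true false false
  * Theta_B x y true false false true * Theta_B x y true false false false
  * Theta_B x y false true true false * Theta_B x y false true false false
  * Theta_B x y false false true true * Theta_B x y false false true false
  * Theta_B x y false false false true * Theta_B x y false false false false)%C.

Lemma calF_B_eq x y :
  calF ((/2) * (x + y))%C ((/2) * (x - y))%C ((/2) * (x - y))%C ((/2) * (x + y))%C
  = rpow (Im x * Im y) (5/2) * Cmod (Theta_B_prod x y).
Proof.
  unfold calF, even_chars, all_chars.
  cbn [filter flat_map map fold_right even_char app negb xorb andb].
  replace (Im ((/2) * (x + y)) * Im ((/2) * (x + y)) - Im ((/2) * (x - y)) * Im ((/2) * (x - y)))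
    with (Im x * Im y)
    by (destruct x as [a b], y as [c d]; unfold Im, Cminus, Copp, Cmult, Cplus, Cinv, RtoC;
        cbn [fst snd]; field).
  unfold Theta_B_prod. rewrite !Cmod_mult. unfold Theta_B. ring.
Qed.

Lemma Theta_B_prod_eq x y : 0 < Im x -> 0 < Im y ->
  (4 * Theta_B_prod x y
   = - ((theta2 x * theta3 x * theta4 x) ^ 2 * (theta2 y * theta3 y * theta4 y) ^ 2
        * (theta3 x ^ 4 * theta4 y ^ 4 - theta4 x ^ 4 * theta3 y ^ 4)))%C.
Proof.
  intros hx hy. unfold Theta_B_prod.
  rewrite (Theta_B_swap x y false true true false), (Theta_B_swap x y false true false false),
    (Theta_B_swap x y false false false true).
  rewrite Theta_B_1111, Theta_B_1100, Theta_B_1001, Theta_B_1000, Theta_B_0011, Theta_B_0010,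
    Theta_B_0000 by assumption.
  symmetry.
  transitivity
    (- ((theta2 x * theta3 x) * (theta2 x * theta4 x) * (theta3 x * theta4 x)
        * ((theta2 y * theta3 y) * (theta2 y * theta4 y) * (theta3 y * theta4 y))
        * ((theta3 x * theta3 x) ^ 2 * (theta4 y * theta4 y) ^ 2
           - (theta4 x * theta4 x) ^ 2 * (theta3 y * theta3 y) ^ 2)))%C; [ring|].
  rewrite (theta2_mul_theta3 x hx), (theta2_mul_theta4 x hx), (theta3_mul_theta4 x hx),
    (theta3_mul_theta3 x hx), (theta4_mul_theta4 x hx), (theta2_mul_theta3 y hy),
    (theta2_mul_theta4 y hy), (theta3_mul_theta4 y hy), (theta3_mul_theta3 y hy),
    (theta4_mul_theta4 y hy).
  ring.
Qed.

Lemma Cmod_Theta_B_prod x y : 0 < Im x -> 0 < Im y ->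
  Cmod (Theta_B_prod x y)
  = / 4 * (Cmod (theta2 x * theta3 x * theta4 x) ^ 2 * Cmod (theta2 y * theta3 y * theta4 y) ^ 2
           * Cmod (theta3 x ^ 4 * theta4 y ^ 4 - theta4 x ^ 4 * theta3 y ^ 4)%C).
Proof.
  intros hx hy. pose proof (f_equal Cmod (Theta_B_prod_eq x y hx hy)) as H.
  set (X := (theta2 x * theta3 x * theta4 x)%C) in *.
  set (Y := (theta2 y * theta3 y * theta4 y)%C) in *.
  set (D := (theta3 x ^ 4 * theta4 y ^ 4 - theta4 x ^ 4 * theta3 y ^ 4)%C) in *.
  rewrite Cmod_opp, !Cmod_mult, !Cmod_pow, Cmod_R, Rabs_pos_eq in H by lra.
  rewrite <- H. field.
Qed.

Lemma rpow_pos a b : 0 < a -> rpow a b = Rpower a b.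
Proof. intros H. unfold rpow. destruct (Rlt_dec 0 a); [reflexivity | lra]. Qed.

Lemma fmod_cube_mul_Im t : 0 < Im t ->
  fmod t ^ 3 * Im t = Rpower (Im t) (5/2) * Cmod (theta2 t * theta3 t * theta4 t) ^ 2.
Proof.
  intros ht. unfold fmod. rewrite rpow_pos by exact ht.
  set (c := Cmod (theta2 t * theta3 t * theta4 t)).
  assert (Hc : rpow c (2/3) ^ 3 = c ^ 2).
  { destruct (Cmod_ge_0 (theta2 t * theta3 t * theta4 t)) as [H|H]; fold c in H.
    - rewrite rpow_pos, <- (Rpower_pow 3), Rpower_mult, <- (Rpower_pow 2)
        by (auto || apply exp_pos).
      f_equal. simpl. field.
    - rewrite <- H. unfold rpow. destruct (Rlt_dec 0 0); [lra|]. simpl. ring. }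
  rewrite Rpow_mult_distr, Hc, <- (Rpower_pow 3), Rpower_mult by apply exp_pos.
  rewrite <- (Rpower_1 (Im t)) at 2 by exact ht.
  replace (Rpower (Im t) (1 / 2 * INR 3) * c ^ 2 * Rpower (Im t) 1)
    with (Rpower (Im t) (1 / 2 * INR 3) * Rpower (Im t) 1 * c ^ 2) by ring.
  rewrite <- Rpower_plus. do 2 f_equal. simpl. field.
Qed.

Theorem lemma5 (x y : C) (hx : 0 < Im x) (hy : 0 < Im y) :
  calF ((/2) * (x + y))%C ((/2) * (x - y))%C ((/2) * (x - y))%C ((/2) * (x + y))%C
  = / 4 * fmod x ^ 3 * fmod y ^ 3 * Im x * Im y *
    Cmod (theta3 x ^ 4 * theta4 y ^ 4 - theta4 x ^ 4 * theta3 y ^ 4)%C.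
Proof.
  rewrite calF_B_eq, Cmod_Theta_B_prod by assumption.
  rewrite rpow_pos, <- Rpower_mult_distr by (auto using Rmult_lt_0_compat).
  replace (/ 4 * fmod x ^ 3 * fmod y ^ 3 * Im x * Im y) with
    (/ 4 * (fmod x ^ 3 * Im x) * (fmod y ^ 3 * Im y)) by ring.
  rewrite !fmod_cube_mul_Im by assumption.
  ring.
Qed.
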